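(* If $X$ is a space satisfying ${\sf S}_1(\mathcal{G}_K,\mathcal{G}_\Gamma)$ and every compact subset of $X$ is finite, then for every $\gamma$-space $Y$, the product $X\times Y$ is a $\gamma$-space.
   Context: All spaces are infinite ${\sf T}_1$ topological spaces. $\mathcal{G}_K$ is the family of all collections $\mathcal{U}$ of ${\sf G}_\delta$ subsets of $X$ with $X\notin\mathcal{U}$ such that each compact subset of $X$ is contained in some member of $\mathcal{U}$. $\mathcal{G}_\Gamma$ is the family of infinite collections $\mathcal{U}$ of ${\sf G}_\delta$ subsets of $X$ such that every infinite subcollection covers $X$. ${\sf S}_1(\mathcal{A},\mathcal{B})$: for each sequence $(A_n)$ of elements of $\mathcal{A}$ there are $B_n\in A_n$ with $\{B_n:n\in\mathbb{N}\}\in\mathcal{B}$. $\Omega$: open covers $\mathcal{U}$ of the space with the space itself not in $\mathcal{U}$ such that every finite subset lies in some member. $\Gamma$: infinite open covers $\mathcal{U}$ such that each point lies outside only finitely many members of $\mathcal{U}$. A $\gamma$-space is a space satisfying ${\sf S}_1(\Omega,\Gamma)$. *)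

From Stdlib Require Import List.
Import ListNotations.
Set Implicit Arguments.

Record topology (X : Type) := {
  is_open : (X -> Prop) -> Prop;
  open_full : is_open (fun _ => True);
  open_inter : forall U V, is_open U -> is_open V -> is_open (fun x => U x /\ V x);
  open_union : forall F : (X -> Prop) -> Prop,
      (forall U, F U -> is_open U) -> is_open (fun x => exists U, F U /\ U x)
}.

Definition T1 {X} (t : topology X) : Prop :=
  forall x y : X, x <> y -> exists U, is_open t U /\ U x /\ ~ U y.

Definition infinite_type (X : Type) : Prop :=
  forall l : list X, exists x, ~ In x l.

(* "space" in the paper: an infinite T1 topological space *)
Definition space {X} (t : topology X) : Prop := infinite_type X /\ T1 t.

Definition compact {X} (t : topology X) (K : X -> Prop) : Prop :=
  forall F : (X -> Prop) -> Prop,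
    (forall U, F U -> is_open t U) ->
    (forall x, K x -> exists U, F U /\ U x) ->
    exists l : list (X -> Prop),
      (forall U, In U l -> F U) /\ (forall x, K x -> exists U, In U l /\ U x).

Definition finite_set {X} (K : X -> Prop) : Prop :=
  exists l : list X, forall x, K x -> In x l.

Definition G_delta {X} (t : topology X) (A : X -> Prop) : Prop :=
  exists U : nat -> (X -> Prop), (forall n, is_open t (U n)) /\
    (forall x, A x <-> forall n, U n x).

Definition whole {X} : X -> Prop := fun _ => True.

Definition infinite_family {X} (F : (X -> Prop) -> Prop) : Prop :=
  forall l : list (X -> Prop), exists A, F A /\ ~ In A l.

Definition subfamily {X} (G F : (X -> Prop) -> Prop) : Prop :=
  forall A, G A -> F A.

Definition cG_K {X} (t : topology X) (F : (X -> Prop) -> Prop) : Prop :=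
  (forall A, F A -> G_delta t A) /\ ~ F whole /\
  (forall K, compact t K -> exists A, F A /\ forall x, K x -> A x).

Definition cG_Gamma {X} (t : topology X) (F : (X -> Prop) -> Prop) : Prop :=
  infinite_family F /\ (forall A, F A -> G_delta t A) /\
  (forall G, subfamily G F -> infinite_family G -> forall x, exists A, G A /\ A x).

Definition cOmega {X} (t : topology X) (F : (X -> Prop) -> Prop) : Prop :=
  (forall A, F A -> is_open t A) /\ ~ F whole /\
  (forall l : list X, exists A, F A /\ forall x, In x l -> A x).

Definition cGamma {X} (t : topology X) (F : (X -> Prop) -> Prop) : Prop :=
  infinite_family F /\ (forall A, F A -> is_open t A) /\
  (forall x, exists l : list (X -> Prop), forall A, F A -> ~ A x -> In A l).

Definition S1 {X} (cA cB : ((X -> Prop) -> Prop) -> Prop) : Prop :=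
  forall An : nat -> ((X -> Prop) -> Prop), (forall n, cA (An n)) ->
    exists Bn : nat -> (X -> Prop), (forall n, An n (Bn n)) /\
      cB (fun C => exists n, C = Bn n).

Definition gamma_space {X} (t : topology X) : Prop :=
  space t /\ S1 (cOmega t) (cGamma t).

Definition prod_open {X Y} (tX : topology X) (tY : topology Y) (W : X * Y -> Prop) : Prop :=
  forall p, W p -> exists U V, is_open tX U /\ is_open tY V /\ U (fst p) /\ V (snd p) /\
    forall q, U (fst q) -> V (snd q) -> W q.

Lemma prod_open_full {X Y} (tX : topology X) (tY : topology Y) :
  prod_open tX tY (fun _ => True).
Proof.
  intros p _. exists (fun _ => True), (fun _ => True).
  repeat split; try apply open_full; auto.
Qed.

Lemma prod_open_inter {X Y} (tX : topology X) (tY : topology Y) U V :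
  prod_open tX tY U -> prod_open tX tY V -> prod_open tX tY (fun x => U x /\ V x).
Proof.
  intros HU HV p [Up Vp].
  destruct (HU p Up) as [A1 [B1 [HA1 [HB1 [a1 [b1 H1]]]]]].
  destruct (HV p Vp) as [A2 [B2 [HA2 [HB2 [a2 [b2 H2]]]]]].
  exists (fun x => A1 x /\ A2 x), (fun y => B1 y /\ B2 y).
  repeat split; try apply open_inter; auto; intuition.
Qed.

Lemma prod_open_union {X Y} (tX : topology X) (tY : topology Y) (F : (X * Y -> Prop) -> Prop) :
  (forall U, F U -> prod_open tX tY U) -> prod_open tX tY (fun x => exists U, F U /\ U x).
Proof.
  intros HF p [U [FU Up]].
  destruct (HF U FU p Up) as [A [B [HA [HB [a [b H]]]]]].
  exists A, B. repeat split; auto. intros q qa qb. exists U; auto.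
Qed.

Definition prod_topology {X Y} (tX : topology X) (tY : topology Y) : topology (X * Y) :=
  {| is_open := prod_open tX tY;
     open_full := prod_open_full tX tY;
     open_inter := @prod_open_inter X Y tX tY;
     open_union := @prod_open_union X Y tX tY |}.

From Stdlib Require Import List Lia Arith Classical ClassicalEpsilon
  FunctionalExtensionality PropExtensionality.
Import ListNotations.

(* The combinatorial core is the "eventual selection" property: for every
   sequence of large covers (U_n) one can pick C_n in U_n such that every
   point lies in all but finitely many C_n.  If the underlying sets are
   closed under finite intersections, S_1(large covers, gamma-families)
   implies eventual selection (apply S_1 to the covers by finite
   intersections U_0 /\ ... /\ U_n and use fresh indices).  This applies to
   X (G_delta large covers, compact sets) and to Y (omega-covers).

   For an omega-cover U_n of X x Y and a finite F <= X, the "slices"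
   V <= Y for which some open A >= F gives A x V inside a member of U_n form
   an omega-cover of Y (tube lemma); a gamma-space Y has a countable
   omega-subcover (V_{n,F,k})_k with boxes A_{n,F,k} x V_{n,F,k}.  The proper
   G_delta sets contained in some intersection  /\_k A_{n,F,k}  form a
   G_K cover of X, because compact sets are finite.  Eventual selection in
   X picks F_n, eventual selection in Y then picks k_n, and the boxes
   A_{n,F_n,k_n} x V_{n,F_n,k_n} eventually contain every point of X x Y;
   the chosen members of U_n thus form a gamma-cover. *)

Lemma set_ext {Z} (A B : Z -> Prop) : (forall z, A z <-> B z) -> A = B.
Proof.
  intro H. apply functional_extensionality; intro z.
  apply propositional_extensionality; auto.
Qed.

Lemma open_ext {Z} (t : topology Z) (A B : Z -> Prop) :
  is_open t A -> (forall z, A z <-> B z) -> is_open t B.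
Proof. intros H E. rewrite <- (set_ext _ _ E). exact H. Qed.

Lemma open_empty {Z} (t : topology Z) : is_open t (fun _ => False).
Proof.
  eapply open_ext.
  - apply (open_union t (fun _ => False)). intros U [].
  - intro z. split; [intros [U [[] _]] | intros []].
Qed.

Lemma open_union2 {Z} (t : topology Z) (A B : Z -> Prop) :
  is_open t A -> is_open t B -> is_open t (fun z => A z \/ B z).
Proof.
  intros HA HB. eapply open_ext.
  - apply (open_union t (fun W => W = A \/ W = B)). intros W [-> | ->]; auto.
  - intro z. split.
    + intros [W [[-> | ->] Hz]]; auto.
    + intros [Hz | Hz]; [exists A | exists B]; auto.
Qed.

Lemma open_compl_point {Z} (t : topology Z) :
  T1 t -> forall z, is_open t (fun x => x <> z).
Proof.
  intros HT z. eapply open_ext.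
  - apply (open_union t (fun W => is_open t W /\ ~ W z)). intros W [HW _]; auto.
  - intro x. split.
    + intros [W [[_ Hz] Hx]] ->; auto.
    + intro Hne. destruct (HT x z Hne) as [W [HW [Hx Hz]]]. exists W; auto.
Qed.

Lemma gdelta_inter {Z} (t : topology Z) (A B : Z -> Prop) :
  G_delta t A -> G_delta t B -> G_delta t (fun z => A z /\ B z).
Proof.
  intros [U [HU EU]] [V [HV EV]].
  exists (fun n z => U n z /\ V n z). split.
  - intro n. apply open_inter; auto.
  - intro z. rewrite EU, EV. split.
    + intros [HUz HVz] n; auto.
    + intro H. split; intro n; apply H.
Qed.

Lemma choice2 {I J B : Type} (R : I -> J -> B -> Prop) :
  (forall i j, exists b, R i j b) -> exists f, forall i j, R i j (f i j).
Proof.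
  intro H. destruct (choice (fun ij b => R (fst ij) (snd ij) b)) as [f Hf].
  - intros [i j]. apply H.
  - exists (fun i j => f (i, j)). intros i j. apply (Hf (i, j)).
Qed.

Lemma choice3 {I J K B : Type} (R : I -> J -> K -> B -> Prop) :
  (forall i j k, exists b, R i j k b) -> exists f, forall i j k, R i j k (f i j k).
Proof.
  intro H. destruct (choice2 (fun ij k b => R (fst ij) (snd ij) k b)) as [f Hf].
  - intros [i j] k. apply H.
  - exists (fun i j k => f (i, j) k). intros i j k. apply (Hf (i, j)).
Qed.

(* G_K is the large cover
   of type (G_delta, compact), Omega that of type (open, finite). *)
Definition large_cover {Z} (P Q : (Z -> Prop) -> Prop) (F : (Z -> Prop) -> Prop) : Prop :=
  (forall A, F A -> P A) /\ ~ F whole /\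
  (forall K, Q K -> exists A, F A /\ forall z, K z -> A z).

(* The combinatorial content of a gamma-cover: infinitely many members, and
   each point lies outside only finitely many of them. *)
Definition gamma_family {Z} (F : (Z -> Prop) -> Prop) : Prop :=
  infinite_family F /\ forall z, exists l, forall A, F A -> ~ A z -> In A l.

Definition range {Z} (C : nat -> Z -> Prop) : (Z -> Prop) -> Prop :=
  fun A => exists n, A = C n.

Definition eventually_covers {Z} (C : nat -> Z -> Prop) : Prop :=
  forall z, exists N, forall m, N <= m -> C m z.

Definition eventual_selection {Z} (cA : ((Z -> Prop) -> Prop) -> Prop) : Prop :=
  forall An : nat -> ((Z -> Prop) -> Prop), (forall n, cA (An n)) ->
    exists C, (forall n, An n (C n)) /\ eventually_covers C.

Lemma S1_mono {Z} (cA cA' cB cB' : ((Z -> Prop) -> Prop) -> Prop) :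
  (forall F, cA' F -> cA F) -> (forall F, cB F -> cB' F) ->
  S1 cA cB -> S1 cA' cB'.
Proof.
  intros HA HB HS An HAn.
  destruct (HS An (fun n => HA _ (HAn n))) as [Bn [HBn Hcov]]. eauto.
Qed.

(* A G_Gamma family is a gamma family: if infinitely many members missed a
   point, these members would form an infinite subfamily not covering it. *)
Lemma G_Gamma_gamma_family {Z} (t : topology Z) (F : (Z -> Prop) -> Prop) :
  cG_Gamma t F -> gamma_family F.
Proof.
  intros [Hinf [_ Hsub]]. split; auto. intro z. apply NNPP; intro Hfin.
  assert (Hmiss : infinite_family (fun A => F A /\ ~ A z)).
  { intro l. apply NNPP; intro Hl. apply Hfin. exists l. intros A HA HAz.
    apply NNPP; intro Hnl. apply Hl. exists A; auto. }
  destruct (Hsub (fun A => F A /\ ~ A z) (fun A HA => proj1 HA) Hmiss z)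
    as [A [[_ HAz] Hz]].
  contradiction.
Qed.

Lemma Gamma_gamma_family {Z} (t : topology Z) (F : (Z -> Prop) -> Prop) :
  cGamma t F -> gamma_family F.
Proof. intros [Hinf [_ Hmiss]]. split; auto. Qed.

Lemma Omega_large_cover {Z} (t : topology Z) (F : (Z -> Prop) -> Prop) :
  cOmega t F <-> large_cover (is_open t) finite_set F.
Proof.
  split.
  - intros [Hopen [Hwhole Hfin]]. repeat split; auto.
    intros K [l Hl]. destruct (Hfin l) as [A [HA Hl']]. eauto.
  - intros [Hopen [Hwhole Hfin]]. repeat split; auto.
    intro l. apply (Hfin (fun z => In z l)). exists l; auto.
Qed.

Lemma eventual_range_gamma_family {Z} (C : nat -> Z -> Prop) :
  eventually_covers C -> (forall n, C n <> whole) -> gamma_family (range C).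
Proof.
  intros Hev Hproper. split.
  - intro l.
    assert (Hlate : exists N, forall m, N <= m -> forall A, In A l -> A <> whole -> A <> C m).
    { induction l as [|A l [N HN]].
      - exists 0. intros m _ A [].
      - destruct (classic (exists z, ~ A z)) as [[z Hz] | Hall].
        + destruct (Hev z) as [Nz HNz]. exists (max N Nz).
          intros m Hm A' [<- | HA'] HA'w.
          * intros ->. apply Hz, HNz. lia.
          * apply HN; auto. lia.
        + exists N. intros m Hm A' [<- | HA'] HA'w.
          * exfalso. apply HA'w, set_ext. intro z. split; [intros; exact I|].
            intros _. apply NNPP; intro Hz. apply Hall; eauto.
          * apply HN; auto. }
    destruct Hlate as [N HN]. exists (C N). split; [exists N; auto|].
    intro Hin. exact (HN N (le_n N) (C N) Hin (Hproper N) eq_refl).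
  - intro z. destruct (Hev z) as [N HN]. exists (map C (seq 0 N)).
    intros A [m ->] Hmz. apply in_map, in_seq.
    destruct (le_lt_dec N m) as [Hle | Hlt]; [exfalso; auto | lia].
Qed.

Definition prefix_meet {Z} (f : nat -> Z -> Prop) (n : nat) : Z -> Prop :=
  fun z => forall i, i <= n -> f i z.

Section FiniteIntersections.
Context {Z : Type}.
Variables P Q : (Z -> Prop) -> Prop.
Hypothesis P_inter : forall A B, P A -> P B -> P (fun z => A z /\ B z).

Lemma prefix_meet_closed (f : nat -> Z -> Prop) (n : nat) :
  (forall i, i <= n -> P (f i)) -> P (prefix_meet f n).
Proof.
  induction n as [|n IH]; intro Hf.
  - replace (prefix_meet f 0) with (f 0) by
      (apply set_ext; intro z; split; [intros Hz i Hi; replace i with 0 by lia; auto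
                                      | intro Hz; apply Hz; lia]).
    apply Hf; lia.
  - replace (prefix_meet f (S n)) with (fun z => prefix_meet f n z /\ f (S n) z).
    + apply P_inter; [apply IH; intros; apply Hf; lia | apply Hf; lia].
    + apply set_ext; intro z. unfold prefix_meet. split.
      * intros [Hn HSn] i Hi. destruct (Nat.eq_dec i (S n)) as [-> | Hne]; auto.
        apply Hn; lia.
      * intro Hz. split; [intros; apply Hz; lia | apply Hz; lia].
Qed.

Definition prefix_meets (An : nat -> (Z -> Prop) -> Prop) (n : nat) : (Z -> Prop) -> Prop :=
  fun W => exists f, (forall i, i <= n -> An i (f i)) /\ W = prefix_meet f n.

Lemma prefix_meets_large_cover (An : nat -> (Z -> Prop) -> Prop) :
  (forall n, large_cover P Q (An n)) -> forall n, large_cover P Q (prefix_meets An n).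
Proof.
  intros HA n. split; [|split].
  - intros W [f [Hf ->]]. apply prefix_meet_closed. intros i Hi. apply (HA i), Hf, Hi.
  - intros [f [Hf Hwhole]]. apply (proj1 (proj2 (HA 0))).
    replace whole with (f 0); [apply Hf; lia|].
    apply set_ext; intro z. split; [intros; exact I|].
    intros _. assert (Hz : whole z) by exact I. rewrite Hwhole in Hz. apply Hz; lia.
  - intros K HK.
    assert (Hmem : forall i, exists A, An i A /\ forall z, K z -> A z)
      by (intro i; apply (HA i), HK).
    apply choice in Hmem as [f Hf].
    exists (prefix_meet f n). split.
    + exists f. split; auto. intros i _. apply Hf.
    + intros z Hz i _. apply Hf, Hz.
Qed.
End FiniteIntersections.

Lemma fresh_index {Z} (B : nat -> Z -> Prop) :
  infinite_family (range B) -> forall m, exists k, m <= k /\ forall j, j < m -> B k <> B j.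
Proof.
  intros Hinf m. destruct (Hinf (map B (seq 0 m))) as [A [[k ->] Hk]].
  exists k. split.
  - destruct (le_lt_dec m k) as [Hle | Hlt]; auto.
    exfalso. apply Hk, in_map, in_seq. lia.
  - intros j Hj E. apply Hk. rewrite E. apply in_map, in_seq. lia.
Qed.

Lemma listed_values_bounded {Z} (B : nat -> Z -> Prop) (l : list (Z -> Prop)) :
  exists N, forall k, In (B k) l -> exists j, j < N /\ B k = B j.
Proof.
  induction l as [|A l [N HN]].
  - exists 0. intros k [].
  - destruct (classic (exists k, A = B k)) as [[k0 ->] | Hnot].
    + exists (max N (S k0)). intros k [E | Hk].
      * exists k0. split; [lia | auto].
      * destruct (HN k Hk) as [j [Hj E]]. exists j. split; [lia | auto].
    + exists N. intros k [E | Hk]; [exfalso; eauto | auto].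
Qed.

Lemma gamma_range_misses_bounded {Z} (B : nat -> Z -> Prop) :
  gamma_family (range B) ->
  forall z, exists N, forall k, ~ B k z -> exists j, j < N /\ B k = B j.
Proof.
  intros [_ Hmiss] z. destruct (Hmiss z) as [l Hl].
  destruct (listed_values_bounded B l) as [N HN].
  exists N. intros k Hk. apply HN, Hl; [exists k |]; auto.
Qed.

(* S_1(large covers, gamma families) yields eventual selection, provided the
   class of admissible sets is closed under binary intersections: select
   from the prefix meets, at fresh indices idx m >= m, and keep the m-th
   factor of the selected meet. *)
Theorem S1_eventual_selection {Z} (P Q : (Z -> Prop) -> Prop) :
  (forall A B, P A -> P B -> P (fun z => A z /\ B z)) ->
  S1 (large_cover P Q) gamma_family -> eventual_selection (large_cover P Q).
Proof.
  intros P_inter HS An HA.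
  destruct (HS (prefix_meets An) (prefix_meets_large_cover P Q P_inter An HA))
    as [B [HB Hgamma]].
  apply choice in HB as [g Hg].
  pose proof (fresh_index B (proj1 Hgamma)) as Hfresh.
  apply choice in Hfresh as [idx Hidx].
  exists (fun m => g (idx m) m). split.
  - intro m. apply (Hg (idx m)), Hidx.
  - intro z. destruct (gamma_range_misses_bounded B Hgamma z) as [N HN].
    exists N. intros m Hm.
    assert (Hz : B (idx m) z).
    { apply NNPP; intro Hn. destruct (HN _ Hn) as [j [Hj E]].
      apply (proj2 (Hidx m) j); [lia | exact E]. }
    destruct (Hg (idx m)) as [_ E]. rewrite E in Hz. apply Hz, Hidx.
Qed.

(* Each finite set lies inside some member of a gamma family: only finitely
   many members miss one of its points. *)
Lemma gamma_family_contains_finite {Z} (F : (Z -> Prop) -> Prop) :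
  gamma_family F -> forall l : list Z, exists A, F A /\ forall z, In z l -> A z.
Proof.
  intros [Hinf Hmiss] l.
  assert (Hbad : exists L, forall A, F A -> (exists z, In z l /\ ~ A z) -> In A L).
  { induction l as [|z l [L HL]].
    - exists []. intros A _ [z [[] _]].
    - destruct (Hmiss z) as [Lz HLz]. exists (Lz ++ L).
      intros A HA [z' [[<- | Hz'] Hn]]; apply in_or_app; [left | right]; eauto. }
  destruct Hbad as [L HL]. destruct (Hinf L) as [A [HA HAL]].
  exists A. split; auto. intros z Hz. apply NNPP; intro Hn. apply HAL, HL; eauto.
Qed.

(* Every omega-cover of a gamma-space has a countable omega-subcover: the
   gamma-cover selected from the constant sequence of covers. *)
Lemma omega_countable_subcover {Z} (t : topology Z) :
  S1 (cOmega t) (cGamma t) ->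
  forall V, cOmega t V -> exists s : nat -> Z -> Prop, (forall k, V (s k)) /\ cOmega t (range s).
Proof.
  intros HS V HV. destruct (HS (fun _ => V) (fun _ => HV)) as [s [Hs Hgamma]].
  exists s. split; auto. destruct HV as [Hopen [Hwhole _]]. split; [|split].
  - intros A [k ->]. apply Hopen, Hs.
  - intros [k Ek]. apply Hwhole. rewrite Ek. apply Hs.
  - apply gamma_family_contains_finite, (Gamma_gamma_family t), Hgamma.
Qed.

Lemma eventual_selection_Gamma {Z} (t : topology Z) (Un : nat -> (Z -> Prop) -> Prop)
  (C : nat -> Z -> Prop) :
  (forall n, cOmega t (Un n)) -> (forall n, Un n (C n)) -> eventually_covers C ->
  cGamma t (range C).
Proof.
  intros HU HC Hev.
  assert (Hproper : forall n, C n <> whole).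
  { intros n E. apply (HU n). rewrite <- E. apply HC. }
  destruct (eventual_range_gamma_family C Hev Hproper) as [Hinf Hmiss].
  split; [|split]; auto.
  intros A [n ->]. apply (HU n), HC.
Qed.

Section Product.
Context {X Y : Type} (tX : topology X) (tY : topology Y).

Let tXY := prod_topology tX tY.

Lemma product_infinite : infinite_type X -> inhabited Y -> infinite_type (X * Y).
Proof.
  intros HX [y] l. destruct (HX (map fst l)) as [x Hx].
  exists (x, y). intro Hin. apply Hx. apply (in_map fst l (x, y) Hin).
Qed.

Lemma open_cylinder_fst (A : X -> Prop) : is_open tX A -> is_open tXY (fun p => A (fst p)).
Proof.
  intros HA p Hp. exists A, whole. repeat split; auto. apply open_full.
Qed.

Lemma open_cylinder_snd (B : Y -> Prop) : is_open tY B -> is_open tXY (fun p => B (snd p)).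
Proof.
  intros HB p Hp. exists whole, B. repeat split; auto. apply open_full.
Qed.

Lemma product_T1 : T1 tX -> T1 tY -> T1 tXY.
Proof.
  intros HX HY [x y] [x' y'] Hne. destruct (classic (x = x')) as [<- | Hx].
  - assert (Hy : y <> y') by congruence. destruct (HY y y' Hy) as [B [HB [By By']]].
    exists (fun p => B (snd p)). split; [apply open_cylinder_snd |]; auto.
  - destruct (HX x x' Hx) as [A [HA [Ax Ax']]].
    exists (fun p => A (fst p)). split; [apply open_cylinder_fst |]; auto.
Qed.

Lemma product_space : space tX -> space tY -> space tXY.
Proof.
  intros [HinfX HT1X] [HinfY HT1Y].
  split; [apply product_infinite | apply product_T1]; auto.
  destruct (HinfY []) as [y _]. exact (inhabits y).
Qed.

Lemma tube_point (W : X * Y -> Prop) : is_open tXY W ->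
  forall x (G : list Y), (forall y, In y G -> W (x, y)) ->
  exists A B, is_open tX A /\ is_open tY B /\ A x /\ (forall y, In y G -> B y) /\
    forall p, A (fst p) -> B (snd p) -> W p.
Proof.
  intros HW x G. induction G as [|y G IH]; intro HG.
  - exists whole, (fun _ => False). repeat split.
    + apply open_full.
    + apply open_empty.
    + intros _ [].
    + intros p _ [].
  - destruct IH as [A1 [B1 [HA1 [HB1 [Ax1 [HG1 Hbox1]]]]]]; [intros; apply HG; simpl; auto|].
    destruct (HW (x, y)) as [A2 [B2 [HA2 [HB2 [Ax2 [By2 Hbox2]]]]]]; [apply HG; simpl; auto|].
    exists (fun z => A1 z /\ A2 z), (fun y => B1 y \/ B2 y). repeat split; auto.
    + apply open_inter; auto.
    + apply open_union2; auto.
    + intros y' [<- | Hy']; auto.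
    + intros p [Ap1 Ap2] [Bp | Bp]; auto.
Qed.

Lemma tube_finite (W : X * Y -> Prop) : is_open tXY W ->
  forall (F : list X) (G : list Y), (forall x y, In x F -> In y G -> W (x, y)) ->
  exists A B, is_open tX A /\ is_open tY B /\ (forall x, In x F -> A x) /\
    (forall y, In y G -> B y) /\ forall p, A (fst p) -> B (snd p) -> W p.
Proof.
  intros HW F G. induction F as [|x F IH]; intro HFG.
  - exists (fun _ => False), whole. repeat split.
    + apply open_empty.
    + apply open_full.
    + intros _ [].
    + intros p [].
  - destruct IH as [A1 [B1 [HA1 [HB1 [HF1 [HG1 Hbox1]]]]]]; [intros; apply HFG; simpl; auto|].
    destruct (tube_point W HW x G) as [A2 [B2 [HA2 [HB2 [Ax2 [HG2 Hbox2]]]]]];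
      [intros; apply HFG; simpl; auto|].
    exists (fun z => A1 z \/ A2 z), (fun y => B1 y /\ B2 y). repeat split; auto.
    + apply open_union2; auto.
    + apply open_inter; auto.
    + intros x' [<- | Hx']; auto.
    + intros p [Ap | Ap] [Bp1 Bp2]; auto.
Qed.

Definition slice (U : (X * Y -> Prop) -> Prop) (F : list X) (V : Y -> Prop) : Prop :=
  is_open tY V /\ V <> whole /\
  exists W, U W /\ exists A, is_open tX A /\ (forall x, In x F -> A x) /\
    forall p, A (fst p) -> V (snd p) -> W p.

(* The slices of an omega-cover form an omega-cover of Y: a member of U
   containing F x G gives a box by the tube lemma; removing a point outside G
   makes its side proper. *)
Lemma slice_omega (U : (X * Y -> Prop) -> Prop) :
  space tY -> cOmega tXY U -> forall F, cOmega tY (slice U F).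
Proof.
  intros [HinfY HT1Y] [Hopen [_ Hfin]] F. split; [|split].
  - intros V [HV _]; auto.
  - intros [_ [Hw _]]. auto.
  - intro G. destruct (HinfY G) as [y0 Hy0].
    destruct (Hfin (list_prod F G)) as [W [HW HFG]].
    destruct (tube_finite W (Hopen W HW) F G) as [A [B [HA [HB [HAF [HBG Hbox]]]]]].
    { intros x y Hx Hy. apply HFG, in_prod; auto. }
    exists (fun y => B y /\ y <> y0). split.
    + split; [apply open_inter; auto; apply open_compl_point; auto|]. split.
      * intro E. assert (Hy : whole y0) by exact I. rewrite <- E in Hy.
        destruct Hy; auto.
      * exists W. split; auto. exists A. repeat split; auto.
        intros p Ap [Bp _]. apply Hbox; auto.
    + intros y Hy. split; auto. intros ->; auto.
Qed.

Section BoxSelection.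
(* Data extracted from a sequence Un of omega-covers of X x Y: for each n, each
   finite F <= X and each k, a member W n F k of Un n containing the box
   A n F k x V n F k, where A n F k is an open set containing F and, for fixed
   n and F, the sets V n F k form an omega-cover of Y. *)
Variable Un : nat -> (X * Y -> Prop) -> Prop.
Variable V : nat -> list X -> nat -> Y -> Prop.
Variable W : nat -> list X -> nat -> X * Y -> Prop.
Variable A : nat -> list X -> nat -> X -> Prop.
Hypothesis V_omega : forall n F, cOmega tY (range (V n F)).
Hypothesis W_member : forall n F k, Un n (W n F k).
Hypothesis A_open : forall n F k, is_open tX (A n F k).
Hypothesis A_contains : forall n F k x, In x F -> A n F k x.
Hypothesis box : forall n F k p, A n F k (fst p) -> V n F k (snd p) -> W n F k p.

Definition kernel_family (n : nat) : (X -> Prop) -> Prop :=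
  fun H => G_delta tX H /\ H <> whole /\ exists F, forall k x, H x -> A n F k x.

(* When compact sets are finite, each kernel family is a G_K cover: a compact
   K <= F lies in the G_delta set  (X minus a point outside F) /\ (/\_k A n F k). *)
Lemma kernel_family_G_K : space tX -> (forall K, compact tX K -> finite_set K) ->
  forall n, large_cover (G_delta tX) (compact tX) (kernel_family n).
Proof.
  intros [HinfX HT1X] Hcompact n. split; [|split].
  - intros H [HH _]; auto.
  - intros [_ [Hw _]]; auto.
  - intros K HK. destruct (Hcompact K HK) as [F HF]. destruct (HinfX F) as [z Hz].
    exists (fun x => x <> z /\ forall k, A n F k x). split; [split; [|split] |].
    + exists (fun j => match j with 0 => fun x => x <> z | S k => A n F k end). split.
      * intros [|k]; [apply open_compl_point | apply A_open]; auto.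
      * intro x. split.
        -- intros [Hxz Hx] [|k]; auto.
        -- intro Hx. split; [apply (Hx 0) | intro k; apply (Hx (S k))].
    + intro E. assert (Hw : whole z) by exact I. rewrite <- E in Hw.
      destruct Hw as [Hzz _]. auto.
    + exists F. intros k x [_ Hx]. auto.
    + intros x Kx. split.
      * intros ->. auto.
      * intro k. apply A_contains, HF, Kx.
Qed.

(* Selecting first kernels H_n (with their F_n) in X, then indices k_n in Y,
   the members W n F_n k_n eventually contain every point of X x Y. *)
Lemma box_selection : space tX -> (forall K, compact tX K -> finite_set K) ->
  eventual_selection (large_cover (G_delta tX) (compact tX)) ->
  eventual_selection (large_cover (is_open tY) finite_set) ->
  exists C, (forall n, Un n (C n)) /\ eventually_covers C.
Proof.
  intros HX Hcompact ESX ESY.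
  destruct (ESX kernel_family (kernel_family_G_K HX Hcompact)) as [H [HH HevX]].
  assert (HF : forall n, exists F, forall k x, H n x -> A n F k x)
    by (intro n; apply (HH n)).
  apply choice in HF as [F HF].
  destruct (ESY (fun n => range (V n (F n)))) as [D [HD HevY]].
  { intro n. apply Omega_large_cover, V_omega. }
  apply choice in HD as [k Hk].
  exists (fun n => W n (F n) (k n)). split; auto.
  intros [x y]. destruct (HevX x) as [N1 H1], (HevY y) as [N2 H2].
  exists (max N1 N2). intros m Hm. apply box; simpl.
  - apply HF, H1. lia.
  - rewrite <- Hk. apply H2. lia.
Qed.
End BoxSelection.

Lemma product_eventual_selection :
  space tX -> space tY -> (forall K, compact tX K -> finite_set K) ->
  eventual_selection (large_cover (G_delta tX) (compact tX)) ->
  S1 (cOmega tY) (cGamma tY) ->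
  eventual_selection (cOmega tXY).
Proof.
  intros HX HY Hcompact ESX HS1Y Un HUn.
  assert (ESY : eventual_selection (large_cover (is_open tY) finite_set)).
  { apply S1_eventual_selection; [exact (open_inter tY) |].
    revert HS1Y. apply S1_mono; [apply Omega_large_cover | apply Gamma_gamma_family]. }
  assert (HV : forall n F, exists V : nat -> Y -> Prop,
             (forall k, slice (Un n) F (V k)) /\ cOmega tY (range V)).
  { intros n F. apply omega_countable_subcover, slice_omega; auto. }
  apply choice2 in HV as [V HV].
  assert (HW : forall n F k, exists W', Un n W' /\ exists A', is_open tX A' /\
             (forall x, In x F -> A' x) /\ forall p, A' (fst p) -> V n F k (snd p) -> W' p)
    by (intros n F k; apply (HV n F)).
  apply choice3 in HW as [W HW].
  assert (HA : forall n F k, exists A', is_open tX A' /\ (forall x, In x F -> A' x) /\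
             forall p, A' (fst p) -> V n F k (snd p) -> W n F k p)
    by (intros n F k; apply HW).
  apply choice3 in HA as [A HA].
  apply (box_selection Un V W A); auto.
  - intros n F. apply HV.
  - intros n F k. apply HW.
  - intros n F k. apply HA.
  - intros n F k. apply HA.
  - intros n F k. apply HA.
Qed.
End Product.

Theorem theorem4p18 (X : Type) (tX : topology X) :
  space tX ->
  S1 (cG_K tX) (cG_Gamma tX) ->
  (forall K : X -> Prop, compact tX K -> finite_set K) ->
  forall (Y : Type) (tY : topology Y),
    gamma_space tY -> gamma_space (prod_topology tX tY).
Proof.
  intros HX HS1X Hcompact Y tY [HY HS1Y].
  split; [apply product_space; auto |].
  assert (ESX : eventual_selection (large_cover (G_delta tX) (compact tX))).
  { apply S1_eventual_selection; [apply gdelta_inter |].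
    revert HS1X. apply S1_mono; [auto | apply G_Gamma_gamma_family]. }
  intros Un HUn.
  destruct (product_eventual_selection tX tY HX HY Hcompact ESX HS1Y Un HUn) as [C [HC Hev]].
  exists C. split; auto. apply (eventual_selection_Gamma _ Un); auto.
Qed.
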